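(* Let $M$ be a $\mathtt{dBang}$ term. If $M$ is meaningful, then $\mathrm{nf}(\mathcal T(M))\neq\emptyset$.
   Context: \textbf{dBang.} Terms: $M,N ::= x \mid \lambda x.M \mid MN \mid M[N/x] \mid\ !M \mid \mathrm{der}\,M$ ($M[N/x]$ explicit substitution binding $x$); $M\{N/x\}$ capture-avoiding substitution. List contexts $L ::= \square\mid L[N/x]$. Root rules: $L\langle\lambda x.M\rangle N \mapsto L\langle M[N/x]\rangle$; $M[L\langle !N\rangle/x]\mapsto L\langle M\{N/x\}\rangle$; $\mathrm{der}(L\langle !N\rangle)\mapsto L\langle N\rangle$. Surface contexts $S ::= \square\mid\lambda x.S\mid SM\mid MS\mid S[M/x]\mid M[S/x]\mid\mathrm{der}\,S$; $\to_S$ is the closure of the root rules under surface contexts. Testing contexts: $T ::= \square\mid T N\mid(\lambda x.T)N$. $M$ is meaningful if there exist a testing context $T$ and a term $P$ with $T\langle M\rangle\to_S^* !P$. \textbf{Resources and Taylor expansion.} Resource terms: $m,n ::= x\mid\lambda x.m\mid mn\mid m[n/x]\mid\mathrm{der}\,m\mid[m_1,\dots,m_k]$ ($k\ge0$ multisets). Resource list contexts $l::=\square\mid l[n/x]$. Resource reduction (target a resource term or the zero symbol $\emptyset$), closed under all contexts: $\mathrm{der}(l\langle[m]\rangle)\to l\langle m\rangle$; $\mathrm{der}(l\langle[m_1,\dots,m_k]\rangle)\to\emptyset$ if $k\ne1$; $l\langle\lambda x.m\rangle n\to l\langle m[n/x]\rangle$; $m[l\langle[n_1,\dots,n_k]\rangle/x]\to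 l\langle m\{n_{\sigma(1)}/x_1,\dots,n_{\sigma(k)}/x_k\}\rangle$ for every permutation $\sigma$ when $x_1,\dots,x_k$ are exactly the free occurrences of $x$ in $m$, and $\to\emptyset$ otherwise. Approximation: $x\sqsubset x$; $\lambda x.m\sqsubset\lambda x.M$ if $m\sqsubset M$; $mn\sqsubset MN$ and $m[n/x]\sqsubset M[N/x]$ if $m\sqsubset M,n\sqsubset N$; $\mathrm{der}\,m\sqsubset\mathrm{der}\,M$ if $m\sqsubset M$; $[m_1,\dots,m_k]\sqsubset\ !M$ for any $k\ge0$ if every $m_i\sqsubset M$. $\mathcal T(M)=\{m\mid m\sqsubset M\}$; $\mathrm{nf}(\mathcal T(M))$ is the set of normal resource terms $p$ with $m\to^*p$ for some $m\in\mathcal T(M)$. *)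

(* Variables are de Bruijn indices; a binder (lambda, explicit substitution)
   binds index 0 in its body. *)
From Stdlib Require Import List Arith Relations Permutation.
Import ListNotations.

(* Es M N  represents  M[N/x]  (x = index 0 bound in M).               *)
Inductive term : Type :=
| Var : nat -> term
| Lam : term -> term
| App : term -> term -> term
| Es  : term -> term -> term
| Bang : term -> term
| Der : term -> term.

Fixpoint lift (c k : nat) (M : term) : term :=
  match M with
  | Var i => Var (if i <? c then i else i + k)
  | Lam M => Lam (lift (S c) k M)
  | App M N => App (lift c k M) (lift c k N)
  | Es M N => Es (lift (S c) k M) (lift c k N)
  | Bang M => Bang (lift c k M)
  | Der M => Der (lift c k M)
  end.

(* subst d N M : capture-avoiding substitution M{N/x} where x is the
   index d (at depth d); the binder of x is removed (indices > d decrease). *)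
Fixpoint subst (d : nat) (N : term) (M : term) : term :=
  match M with
  | Var i => if i =? d then lift 0 d N else if d <? i then Var (i - 1) else Var i
  | Lam M => Lam (subst (S d) N M)
  | App M1 M2 => App (subst d N M1) (subst d N M2)
  | Es M1 M2 => Es (subst (S d) N M1) (subst d N M2)
  | Bang M => Bang (subst d N M)
  | Der M => Der (subst d N M)
  end.

Definition up (f : nat -> nat) (i : nat) : nat :=
  match i with 0 => 0 | S j => S (f j) end.

Fixpoint rename (f : nat -> nat) (M : term) : term :=
  match M with
  | Var i => Var (f i)
  | Lam M => Lam (rename (up f) M)
  | App M N => App (rename f M) (rename f N)
  | Es M N => Es (rename (up f) M) (rename f N)
  | Bang M => Bang (rename f M)
  | Der M => Der (rename f M)
  end.

(* List contexts  L ::= [] | L[N/x].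
   plugL [N1; ...; Nk] M = (...(M[Nk/xk])...)[N1/x1]  (head = outermost). *)
Fixpoint plugL (L : list term) (M : term) : term :=
  match L with
  | [] => M
  | N :: L' => Es (plugL L' M) N
  end.

Inductive root : term -> term -> Prop :=
| root_dB (L : list term) (M N : term) :
    root (App (plugL L (Lam M)) N) (plugL L (Es M (lift 0 (length L) N)))
| root_sbang (L : list term) (M N : term) :
    root (Es M (plugL L (Bang N))) (plugL L (subst 0 N (lift 1 (length L) M)))
| root_dbang (L : list term) (N : term) :
    root (Der (plugL L (Bang N))) (plugL L N).

Inductive sstep : term -> term -> Prop :=
| ss_root M M' : root M M' -> sstep M M'
| ss_lam M M' : sstep M M' -> sstep (Lam M) (Lam M')
| ss_appl M M' N : sstep M M' -> sstep (App M N) (App M' N)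
| ss_appr M N N' : sstep N N' -> sstep (App M N) (App M N')
| ss_esl M M' N : sstep M M' -> sstep (Es M N) (Es M' N)
| ss_esr M N N' : sstep N N' -> sstep (Es M N) (Es M N')
| ss_der M M' : sstep M M' -> sstep (Der M) (Der M').

Definition ssteps : term -> term -> Prop := clos_refl_trans_1n term sstep.

(* Plugging is the usual (capturing) context plugging of the named syntax:
   in (\x.T) N the binder may capture a free variable of the plugged term.
   In de Bruijn form the binder of TLamApp x T N captures the free index x
   of the plugged term (cap x renames x to 0 and shifts the other free
   indices by one); choosing an index not free in the plugged term
   corresponds to a binder that captures nothing. *)
Inductive tctx : Type :=
| THole : tctx
| TApp : tctx -> term -> tctx
| TLamApp : nat -> tctx -> term -> tctx.

Definition cap (x : nat) : term -> term :=
  rename (fun i => if i =? x then 0 else S i).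

Fixpoint plugT (T : tctx) (M : term) : term :=
  match T with
  | THole => M
  | TApp T N => App (plugT T M) N
  | TLamApp x T N => App (Lam (plugT T (cap x M))) N
  end.

Definition meaningful (M : term) : Prop :=
  exists (T : tctx) (P : term), ssteps (plugT T M) (Bang P).

(* Multisets are represented by lists; all notions below are invariant
   under permutation of bags (approximation ranges over all lists, and the
   substitution rule ranges over all permutations). *)
Inductive rterm : Type :=
| RVar : nat -> rterm
| RLam : rterm -> rterm
| RApp : rterm -> rterm -> rterm
| RES  : rterm -> rterm -> rterm
| RDer : rterm -> rterm
| RBag : list rterm -> rterm.

Fixpoint rlift (c k : nat) (m : rterm) : rterm :=
  match m with
  | RVar i => RVar (if i <? c then i else i + k)
  | RLam m => RLam (rlift (S c) k m)
  | RApp m n => RApp (rlift c k m) (rlift c k n)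
  | RES m n => RES (rlift (S c) k m) (rlift c k n)
  | RDer m => RDer (rlift c k m)
  | RBag ms => RBag (map (rlift c k) ms)
  end.

Fixpoint occ (d : nat) (m : rterm) : nat :=
  match m with
  | RVar i => if i =? d then 1 else 0
  | RLam m => occ (S d) m
  | RApp m n => occ d m + occ d n
  | RES m n => occ (S d) m + occ d n
  | RDer m => occ d m
  | RBag ms => list_sum (map (occ d) ms)
  end.

(* Linear substitution m{n1/x1,...,nk/xk}: the occurrences of index d in m,
   taken left to right, are replaced by the successive elements of ns;
   the binder of x is removed.  Returns the result and the unused list. *)
Fixpoint lsub (d : nat) (m : rterm) (ns : list rterm) : rterm * list rterm :=
  match m with
  | RVar i =>
      if i =? d then
        match ns with
        | n :: ns' => (rlift 0 d n, ns')
        | [] => (RVar i, [])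
        end
      else if d <? i then (RVar (i - 1), ns) else (RVar i, ns)
  | RLam m => let (m', ns') := lsub (S d) m ns in (RLam m', ns')
  | RApp m n =>
      let (m', ns1) := lsub d m ns in
      let (n', ns2) := lsub d n ns1 in (RApp m' n', ns2)
  | RES m n =>
      let (m', ns1) := lsub (S d) m ns in
      let (n', ns2) := lsub d n ns1 in (RES m' n', ns2)
  | RDer m => let (m', ns') := lsub d m ns in (RDer m', ns')
  | RBag ms =>
      let fix go (ms : list rterm) (ns : list rterm) : list rterm * list rterm :=
        match ms with
        | [] => ([], ns)
        | m :: ms' =>
            let (m', ns1) := lsub d m ns in
            let (ms'', ns2) := go ms' ns1 in (m' :: ms'', ns2)
        end in
      let (ms', ns') := go ms ns in (RBag ms', ns')
  end.

Fixpoint rplugL (l : list rterm) (m : rterm) : rterm :=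
  match l with
  | [] => m
  | n :: l' => RES (rplugL l' m) n
  end.

(* Resource reduction; target is a resource term (Some) or zero (None).
   Closed under all contexts (zero in a context is zero). *)
Inductive rstep : rterm -> option rterm -> Prop :=
| r_der1 (l : list rterm) (m : rterm) :
    rstep (RDer (rplugL l (RBag [m]))) (Some (rplugL l m))
| r_der0 (l : list rterm) (ms : list rterm) :
    length ms <> 1 -> rstep (RDer (rplugL l (RBag ms))) None
| r_beta (l : list rterm) (m n : rterm) :
    rstep (RApp (rplugL l (RLam m)) n)
          (Some (rplugL l (RES m (rlift 0 (length l) n))))
| r_subst (l : list rterm) (m : rterm) (ns ns' : list rterm) :
    occ 0 m = length ns -> Permutation ns ns' ->
    rstep (RES m (rplugL l (RBag ns)))
          (Some (rplugL l (fst (lsub 0 (rlift 1 (length l) m) ns'))))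
| r_subst0 (l : list rterm) (m : rterm) (ns : list rterm) :
    occ 0 m <> length ns ->
    rstep (RES m (rplugL l (RBag ns))) None
| r_lam m o : rstep m o -> rstep (RLam m) (option_map RLam o)
| r_appl m o n : rstep m o -> rstep (RApp m n) (option_map (fun m' => RApp m' n) o)
| r_appr m n o : rstep n o -> rstep (RApp m n) (option_map (fun n' => RApp m n') o)
| r_esl m o n : rstep m o -> rstep (RES m n) (option_map (fun m' => RES m' n) o)
| r_esr m n o : rstep n o -> rstep (RES m n) (option_map (fun n' => RES m n') o)
| r_der m o : rstep m o -> rstep (RDer m) (option_map RDer o)
| r_bag ms1 m ms2 o : rstep m o ->
    rstep (RBag (ms1 ++ m :: ms2)) (option_map (fun m' => RBag (ms1 ++ m' :: ms2)) o).

Definition rsteps : rterm -> rterm -> Prop :=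
  clos_refl_trans_1n rterm (fun m n => rstep m (Some n)).

Definition rnormal (p : rterm) : Prop := forall o, ~ rstep p o.

Inductive approx : rterm -> term -> Prop :=
| ap_var i : approx (RVar i) (Var i)
| ap_lam m M : approx m M -> approx (RLam m) (Lam M)
| ap_app m n M N : approx m M -> approx n N -> approx (RApp m n) (App M N)
| ap_es m n M N : approx m M -> approx n N -> approx (RES m n) (Es M N)
| ap_der m M : approx m M -> approx (RDer m) (Der M)
| ap_bag ms M : Forall (fun m => approx m M) ms -> approx (RBag ms) (Bang M).

Definition taylor (M : term) : rterm -> Prop := fun m => approx m M.

Definition nf_taylor (M : term) : rterm -> Prop :=
  fun p => rnormal p /\ exists m, taylor M m /\ rsteps m p.

(* A meaningful term surface-normalises.  Surface reduction has the diamond property,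
   hence is uniformly normalising: as [T<M>] reaches the normal form [!P] in [n] steps,
   no surface reduction from [T<M>] is longer than [n], and since testing contexts are
   surface contexts the same bound holds from [M], which therefore reaches a surface
   normal form [N].  Surface steps are simulated backwards in the Taylor expansion: every
   approximant of a reduct is a one-step resource reduct of an approximant of the redex.
   The approximant of [N] with all bags empty is resource-normal, because its resource
   redexes would be surface redexes of [N]; pulling it back along [M ->* N] gives an
   approximant of [M] reducing to a normal resource term. *)

From Stdlib Require Import List Arith Lia Permutation Classical.
Import ListNotations.

(** * Parallel substitution *)

Ltac nat_cases :=
  repeat match goal with
  | |- context [?a <? ?b] => destruct (Nat.ltb_spec a b)
  | |- context [?a =? ?b] => destruct (Nat.eqb_spec a b)
  end; try (exfalso; lia); try reflexivity; try (f_equal; lia).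

Definition up_sub (s : nat -> term) (i : nat) : term :=
  match i with 0 => Var 0 | S j => lift 0 1 (s j) end.

Fixpoint psub (s : nat -> term) (M : term) : term :=
  match M with
  | Var i => s i
  | Lam M => Lam (psub (up_sub s) M)
  | App M N => App (psub s M) (psub s N)
  | Es M N => Es (psub (up_sub s) M) (psub s N)
  | Bang M => Bang (psub s M)
  | Der M => Der (psub s M)
  end.

Definition lift_idx (c k i : nat) : nat := if i <? c then i else i + k.

Definition subst_sub (d : nat) (N : term) (i : nat) : term :=
  if i =? d then lift 0 d N else if d <? i then Var (i - 1) else Var i.

Lemma up_ext f g : (forall i, f i = g i) -> forall i, up f i = up g i.
Proof. intros H [|i]; simpl; auto. Qed.

Lemma rename_ext M : forall f g, (forall i, f i = g i) -> rename f M = rename g M.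
Proof. induction M; intros f g H; simpl; f_equal; auto using up_ext. Qed.

Lemma rename_comp M : forall f g, rename f (rename g M) = rename (fun i => f (g i)) M.
Proof.
  induction M; intros f g; simpl; f_equal; auto;
    try (rewrite IHM || rewrite IHM1); apply rename_ext; intros [|i]; reflexivity.
Qed.

Lemma lift_rename M : forall c k, lift c k M = rename (lift_idx c k) M.
Proof.
  induction M; intros c k; simpl; f_equal; auto;
    try (rewrite IHM || rewrite IHM1); try apply rename_ext; try intros [|i];
    unfold lift_idx; simpl; nat_cases.
Qed.

Lemma lift_0_1 M : lift 0 1 M = rename S M.
Proof. rewrite lift_rename; apply rename_ext; intros i; unfold lift_idx; simpl; lia. Qed.

Lemma lift_0_add N a b : lift 0 a (lift 0 b N) = lift 0 (a + b) N.
Proof.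
  rewrite !lift_rename, rename_comp; apply rename_ext; intros i; unfold lift_idx; simpl; lia.
Qed.

Lemma up_sub_ext f g : (forall i, f i = g i) -> forall i, up_sub f i = up_sub g i.
Proof. intros H [|i]; simpl; rewrite ?H; reflexivity. Qed.

Lemma psub_ext M : forall f g, (forall i, f i = g i) -> psub f M = psub g M.
Proof. induction M; intros f g H; simpl; f_equal; auto using up_sub_ext. Qed.

Lemma psub_id M : forall s, (forall i, s i = Var i) -> psub s M = M.
Proof.
  induction M; intros s H; simpl; f_equal; auto;
    (apply IHM || apply IHM1); intros [|i]; simpl; rewrite ?H; simpl; nat_cases.
Qed.

Lemma psub_rename M : forall s f, psub s (rename f M) = psub (fun i => s (f i)) M.
Proof.
  induction M; intros s f; simpl; f_equal; auto;
    try (rewrite IHM || rewrite IHM1); apply psub_ext; intros [|i]; reflexivity.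
Qed.

Lemma rename_psub M : forall s f, rename f (psub s M) = psub (fun i => rename f (s i)) M.
Proof.
  induction M; intros s f; simpl; f_equal; auto;
    try (rewrite IHM || rewrite IHM1); apply psub_ext; intros [|i]; simpl; auto;
    rewrite !lift_0_1, !rename_comp; reflexivity.
Qed.

Lemma psub_psub M : forall s t, psub t (psub s M) = psub (fun i => psub t (s i)) M.
Proof.
  induction M; intros s t; simpl; f_equal; auto;
    try (rewrite IHM || rewrite IHM1); apply psub_ext; intros [|i]; simpl; auto;
    rewrite !lift_0_1, psub_rename, rename_psub; apply psub_ext; intros j; simpl;
    rewrite lift_0_1; reflexivity.
Qed.

Lemma rename_as_psub M : forall f, rename f M = psub (fun i => Var (f i)) M.
Proof.
  induction M; intros f; simpl; f_equal; auto;
    try (rewrite IHM || rewrite IHM1); apply psub_ext; intros [|i]; simpl; nat_cases.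
Qed.

Lemma lift_psub M c k : lift c k M = psub (fun i => Var (lift_idx c k i)) M.
Proof. rewrite lift_rename, rename_as_psub; reflexivity. Qed.

Lemma lift_0_0 N : lift 0 0 N = N.
Proof. rewrite lift_psub; apply psub_id; intros i; unfold lift_idx; simpl; f_equal; lia. Qed.

Lemma subst_psub M : forall d N, subst d N M = psub (subst_sub d N) M.
Proof.
  induction M; intros d N; simpl; f_equal; auto;
    try (rewrite IHM || rewrite IHM1); apply psub_ext; intros [|i]; unfold subst_sub; simpl;
    nat_cases; try (rewrite lift_0_add; reflexivity); simpl; nat_cases.
Qed.
Fixpoint up_subn (k : nat) (s : nat -> term) : nat -> term :=
  match k with 0 => s | S k => up_subn k (up_sub s) end.

Fixpoint psubL (s : nat -> term) (L : list term) : list term :=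
  match L with [] => [] | N :: L => psub s N :: psubL (up_sub s) L end.

Lemma psubL_length L : forall s, length (psubL s L) = length L.
Proof. induction L; intros; simpl; auto. Qed.

Lemma psub_plugL L : forall s X,
  psub s (plugL L X) = plugL (psubL s L) (psub (up_subn (length L) s) X).
Proof. induction L; intros; simpl; rewrite ?IHL; reflexivity. Qed.

Lemma plugL_app L1 : forall L2 X, plugL (L1 ++ L2) X = plugL L1 (plugL L2 X).
Proof. induction L1; intros; simpl; rewrite ?IHL1; reflexivity. Qed.

Lemma up_subn_add k : forall s i, up_subn k s (k + i) = lift 0 k (s i).
Proof.
  induction k; intros s i; simpl.
  - rewrite lift_0_0; reflexivity.
  - rewrite <- Nat.add_succ_r, IHk; simpl. rewrite lift_0_add; f_equal; lia.
Qed.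

Lemma psub_lift0 t u n n' N : (forall i, t (n + i) = lift 0 n' (u i)) ->
  psub t (lift 0 n N) = lift 0 n' (psub u N).
Proof.
  intros H. rewrite !lift_psub, !psub_psub. apply psub_ext; intros i; simpl.
  unfold lift_idx; simpl. rewrite Nat.add_comm, H, lift_psub. reflexivity.
Qed.

Lemma psub_subst_lift1 t u n n' N M : (forall i, t (n + i) = lift 0 n' (u i)) ->
  psub t (subst 0 N (lift 1 n M)) = subst 0 (psub t N) (lift 1 n' (psub (up_sub u) M)).
Proof.
  intros H. rewrite !lift_psub, !subst_psub, !psub_psub. apply psub_ext; intros [|j].
  - simpl. unfold subst_sub, lift_idx; simpl. rewrite !lift_0_0. reflexivity.
  - simpl. unfold subst_sub at 1, lift_idx at 1; simpl.
    replace (j + n - 0) with (n + j) by lia. rewrite H.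
    rewrite lift_0_1, psub_rename, lift_psub. apply psub_ext; intros x.
    unfold lift_idx. nat_cases.
Qed.

Lemma psub_lift0_shift s n n' N : (forall i, s (n + i) = Var (n' + i)) ->
  psub s (lift 0 n N) = lift 0 n' N.
Proof.
  intros H. rewrite (psub_lift0 s Var n n'), psub_id; auto.
  intros i. rewrite H; simpl. f_equal; lia.
Qed.

Lemma psub_subst_lift1_shift s n n' N M : (forall i, s (n + i) = Var (n' + i)) ->
  psub s (subst 0 N (lift 1 n M)) = subst 0 (psub s N) (lift 1 n' M).
Proof.
  intros H. rewrite (psub_subst_lift1 s Var n n').
  - rewrite (psub_id M); [reflexivity|]. intros [|i]; simpl; nat_cases.
  - intros i. rewrite H; simpl. f_equal; lia.
Qed.

Lemma sstep_plugL L : forall Y Y', sstep Y Y' -> sstep (plugL L Y) (plugL L Y').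
Proof. induction L; intros; simpl; auto using sstep. Qed.

Lemma sstep_psub A B : sstep A B -> forall s, sstep (psub s A) (psub s B).
Proof.
  induction 1 as [A B Hr| | | | | |]; intros s; simpl; auto using sstep.
  apply ss_root. destruct Hr as [L M N|L M N|L N]; simpl; rewrite !psub_plugL; simpl.
  - rewrite (psub_lift0 (up_subn (length L) s) s (length L) (length L)) by apply up_subn_add.
    generalize (root_dB (psubL s L) (psub (up_sub (up_subn (length L) s)) M) (psub s N)).
    rewrite psubL_length; exact id.
  - rewrite (psub_subst_lift1 (up_subn (length L) s) s (length L) (length L))
      by apply up_subn_add.
    generalize (root_sbang (psubL s L) (psub (up_sub s) M) (psub (up_subn (length L) s) N)).
    rewrite psubL_length; exact id.
  - apply root_dbang.
Qed.

Lemma sstep_rename A B f : sstep A B -> sstep (rename f A) (rename f B).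
Proof. intros H. rewrite !rename_as_psub. apply sstep_psub; auto. Qed.

(** * Surface reduction: diamond property and uniform normalisation *)

(* A step of the list context itself, uniform in the term plugged into its hole. *)
Definition ctx_step (L L' : list term) (s : nat -> term) : Prop :=
  (forall Y, sstep (plugL L Y) (plugL L' (psub s Y))) /\
  (forall i, s (length L + i) = Var (length L' + i)).

Lemma subst_lift_plugL L L0 N : exists L' s,
  (forall Y, plugL L (subst 0 N (lift 1 (length L) (plugL L0 Y))) = plugL L' (psub s Y)) /\
  (forall i, s (length L0 + S i) = Var (length L' + i)).
Proof.
  set (tau := fun i => psub (subst_sub 0 N) (Var (lift_idx 1 (length L) i))).
  exists (L ++ psubL tau L0), (up_subn (length L0) tau). split.
  - intros Y. rewrite plugL_app, lift_psub, subst_psub, psub_psub, psub_plugL. reflexivity.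
  - intros i. rewrite length_app, psubL_length, up_subn_add.
    unfold tau; simpl; unfold subst_sub, lift_idx; simpl. nat_cases.
Qed.

Lemma sstep_plugL_inv L : forall X u, sstep (plugL L X) u ->
  (exists X', sstep X X' /\ u = plugL L X') \/
  (exists L' s, u = plugL L' (psub s X) /\ ctx_step L L' s).
Proof.
  induction L as [|A L0 IH]; intros X u H; simpl in H.
  - left; eauto.
  - inversion H as [? ? Hr| |? | |? ? ? HL|? ? A' HA|]; subst.
    + inversion Hr as [|L ? N|]; subst. right.
      destruct (subst_lift_plugL L L0 N) as [L' [s [Heq Hs]]].
      exists L', s. split; [apply Heq|split].
      * intros Y. simpl. rewrite <- Heq. apply ss_root, root_sbang.
      * intros i. simpl. rewrite <- Nat.add_succ_r. apply Hs.
    + destruct (IH X _ HL) as [[X' [HX ->]] | [L' [s [-> [HY Hs]]]]].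
      * left; eauto.
      * right. exists (A :: L'), s. split; [reflexivity|split].
        -- intros Y. apply ss_esl, HY.
        -- intros i. simpl. rewrite <- !Nat.add_succ_r, Hs. reflexivity.
    + right. exists (A' :: L0), Var. rewrite psub_id by reflexivity. split; [reflexivity|split].
      * intros Y. rewrite psub_id by reflexivity. apply ss_esr, HA.
      * reflexivity.
Qed.

Definition not_Es (X : term) : Prop := match X with Es _ _ => False | _ => True end.

Lemma plugL_inj L : forall L' X X', not_Es X -> not_Es X' ->
  plugL L X = plugL L' X' -> L = L' /\ X = X'.
Proof.
  induction L as [|A L IH]; intros [|A' L'] X X' HX HX' E; simpl in *; subst;
    try contradiction; auto.
  injection E as E ->. destruct (IH L' X X' HX HX' E) as [-> ->]. auto.
Qed.

Lemma root_functional t u1 u2 : root t u1 -> root t u2 -> u1 = u2.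
Proof.
  intros H1 H2; destruct H1; inversion H2; subst;
  match goal with H : plugL _ _ = plugL _ _ |- _ =>
    apply plugL_inj in H; [destruct H as [? HX]; subst; try injection HX as ?; subst
                          | exact I | exact I] end;
  reflexivity.
Qed.

Definition snormal (v : term) : Prop := forall u, ~ sstep v u.

Lemma snormal_Bang N : snormal (Bang N).
Proof. intros u H. inversion H as [? ? Hr| | | | | |]. inversion Hr. Qed.

Definition sjoin (u1 u2 : term) : Prop :=
  u1 = u2 \/ exists w, sstep u1 w /\ sstep u2 w.

Lemma sjoin_sym u1 u2 : sjoin u1 u2 -> sjoin u2 u1.
Proof. intros [->|[w [H1 H2]]]; [left|right]; eauto. Qed.

Lemma dB_sjoin L M N u : sstep (App (plugL L (Lam M)) N) u ->
  sjoin (plugL L (Es M (lift 0 (length L) N))) u.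
Proof.
  intros H. inversion H as [? ? Hr| |? ? ? HL|? ? N' HN| | |]; subst.
  - left. eapply root_functional; [apply root_dB|exact Hr].
  - right. destruct (sstep_plugL_inv _ _ _ HL) as [[X' [HX ->]] | [L' [s [-> [HY Hs]]]]].
    + inversion HX as [? ? Hr|? M' HM| | | | |]; subst; [inversion Hr|].
      exists (plugL L (Es M' (lift 0 (length L) N))). split.
      * apply sstep_plugL, ss_esl, HM.
      * apply ss_root, root_dB.
    + exists (plugL L' (Es (psub (up_sub s) M) (lift 0 (length L') N))). split.
      * rewrite <- (psub_lift0_shift s (length L) (length L') N Hs). apply HY.
      * apply ss_root, root_dB.
  - right. exists (plugL L (Es M (lift 0 (length L) N'))). split.
    + apply sstep_plugL, ss_esr. rewrite !lift_psub. apply sstep_psub, HN.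
    + apply ss_root, root_dB.
Qed.

Lemma sbang_sjoin L M N u : sstep (Es M (plugL L (Bang N))) u ->
  sjoin (plugL L (subst 0 N (lift 1 (length L) M))) u.
Proof.
  intros H. inversion H as [? ? Hr| | | |? M' ? HM|? ? ? HL|]; subst.
  - left. eapply root_functional; [apply root_sbang|exact Hr].
  - right. exists (plugL L (subst 0 N (lift 1 (length L) M'))). split.
    + apply sstep_plugL. rewrite !lift_psub, !subst_psub. apply sstep_psub, sstep_psub, HM.
    + apply ss_root, root_sbang.
  - right. destruct (sstep_plugL_inv _ _ _ HL) as [[X' [HX ->]] | [L' [s [-> [HY Hs]]]]].
    + exfalso. exact (snormal_Bang N X' HX).
    + exists (plugL L' (subst 0 (psub s N) (lift 1 (length L') M))). split.
      * rewrite <- (psub_subst_lift1_shift s (length L) (length L') N M Hs). apply HY.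
      * apply ss_root, root_sbang.
Qed.

Lemma dbang_sjoin L N u : sstep (Der (plugL L (Bang N))) u -> sjoin (plugL L N) u.
Proof.
  intros H. inversion H as [? ? Hr| | | | | |? ? HL]; subst.
  - left. eapply root_functional; [apply root_dbang|exact Hr].
  - right. destruct (sstep_plugL_inv _ _ _ HL) as [[X' [HX ->]] | [L' [s [-> [HY Hs]]]]].
    + exfalso. exact (snormal_Bang N X' HX).
    + exists (plugL L' (psub s N)). split; [apply HY|apply ss_root, root_dbang].
Qed.

Lemma root_sjoin t u1 u2 : root t u1 -> sstep t u2 -> sjoin u1 u2.
Proof.
  intros []; [apply dB_sjoin|apply sbang_sjoin|apply dbang_sjoin].
Qed.

Lemma sstep_diamond t u1 u2 : sstep t u1 -> sstep t u2 -> sjoin u1 u2.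
Proof.
  intros H1; revert u2.
  induction H1 as [? ? Hr|M M' H IH|M M' N H IH|M N N' H IH|M M' N H IH|M N N' H IH|M M' H IH];
    intros u2 H2; [exact (root_sjoin _ _ _ Hr H2)|..];
    inversion H2 as [? ? Hr|? M2 H'|? M2 ? H'|? ? N2 H'|? M2 ? H'|? ? N2 H'|? M2 H']; subst;
    try (apply sjoin_sym; eapply root_sjoin; [exact Hr|eauto using sstep]);
    try (destruct (IH _ H') as [->|[w [Hw Hw']]]; [left; reflexivity|]);
    right; eexists; split; eauto using sstep.
Qed.

Inductive sstepsN : nat -> term -> term -> Prop :=
| sstepsN_0 t : sstepsN 0 t t
| sstepsN_S n t u v : sstep t u -> sstepsN n u v -> sstepsN (S n) t v.

Lemma sstepsN_snormal_bound n : forall t v, sstepsN n t v -> snormal v ->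
  forall m u, sstepsN m t u -> m <= n /\ sstepsN (n - m) u v.
Proof.
  induction n as [|n IH]; intros t v Htv Hv m u Htu.
  - inversion Htv; subst. inversion Htu as [|? ? t1 ? Ht1]; subst.
    + split; auto.
    + exfalso. exact (Hv _ Ht1).
  - inversion Htv as [|? ? t1 ? Ht1 Ht1v]; subst.
    inversion Htu as [|m' ? u1 ? Hu1 Hu1u]; subst; [split; [lia|exact Htv]|].
    destruct (sstep_diamond _ _ _ Ht1 Hu1) as [<- | [w [Ht1w Hu1w]]].
    + destruct (IH _ _ Ht1v Hv _ _ Hu1u). split; [lia|assumption].
    + destruct (IH _ _ Ht1v Hv 1 w) as [Hle Hwv].
      { econstructor; [exact Ht1w|constructor]. }
      assert (Hu1v : sstepsN n u1 v).
      { destruct n as [|n]; [lia|]. econstructor; [exact Hu1w|].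
        rewrite Nat.sub_1_r in Hwv. exact Hwv. }
      destruct (IH _ _ Hu1v Hv _ _ Hu1u). split; [lia|assumption].
Qed.

Lemma sstep_plugT T : forall A B, sstep A B -> sstep (plugT T A) (plugT T B).
Proof.
  induction T; intros A B H; simpl; auto.
  - apply ss_appl; auto.
  - apply ss_appl, ss_lam, IHT, sstep_rename, H.
Qed.

Lemma sstepsN_plugT T n : forall A B, sstepsN n A B -> sstepsN n (plugT T A) (plugT T B).
Proof.
  induction n; intros A B H; inversion H; subst; econstructor; eauto using sstep_plugT.
Qed.

Lemma ssteps_snoc M M0 u : ssteps M M0 -> sstep M0 u -> ssteps M u.
Proof.
  induction 1 as [|x y z Hxy _ IH]; intros Hu.
  - econstructor; [exact Hu|constructor].
  - econstructor; [exact Hxy|exact (IH Hu)].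
Qed.

Lemma ssteps_sstepsN t v : ssteps t v -> exists n, sstepsN n t v.
Proof.
  induction 1 as [|t u v Htu _ [n Huv]]; [exists 0|exists (S n)]; econstructor; eauto.
Qed.

Lemma meaningful_snormalizes M : meaningful M -> exists N, ssteps M N /\ snormal N.
Proof.
  intros [T [P HP]]. destruct (ssteps_sstepsN _ _ HP) as [n Hn].
  apply NNPP. intros Hno.
  assert (Hlong : forall k M0, ssteps M M0 -> exists M', sstepsN k M0 M').
  { induction k as [|k IH]; intros M0 HM0; [exists M0; constructor|].
    assert (Hred : exists u, sstep M0 u).
    { apply NNPP. intros Hnf. apply Hno. exists M0. split; [exact HM0|].
      intros u Hu. apply Hnf. eauto. }
    destruct Hred as [u Hu]. destruct (IH u (ssteps_snoc _ _ _ HM0 Hu)) as [M' HM'].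
    exists M'. econstructor; eauto. }
  destruct (Hlong (S n) M) as [M' HM']; [constructor|].
  apply (sstepsN_plugT T) in HM'.
  destruct (sstepsN_snormal_bound _ _ _ Hn (snormal_Bang P) _ _ HM'). lia.
Qed.

(** * Backward simulation in the Taylor expansion *)

Lemma approx_plugL_inv L : forall X b, approx b (plugL L X) ->
  exists l x, b = rplugL l x /\ Forall2 approx l L /\ approx x X.
Proof.
  induction L as [|A L IH]; intros X b H; simpl in H.
  - exists [], b. auto.
  - inversion H as [| | |b' a ? ? Hb' Ha| |]; subst.
    destruct (IH _ _ Hb') as [l [x [-> [Hl Hx]]]].
    exists (a :: l), x. auto.
Qed.

Lemma approx_plugL l L x X : Forall2 approx l L -> approx x X -> approx (rplugL l x) (plugL L X).
Proof. induction 1; intros; simpl; auto using approx. Qed.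

Lemma approx_lift_inv M : forall c k r, approx r (lift c k M) ->
  exists m, approx m M /\ r = rlift c k m /\ forall d, d < c -> occ d r = occ d m.
Proof.
  induction M; intros c k r H; simpl in H; inversion H as [|? ? H1|? ? ? ? H1 H2|? ? ? ? H1 H2|? ? H1|rs ? Hrs];
    subst.
  - exists (RVar n). split; [constructor|split; [reflexivity|]].
    intros d Hd. simpl. nat_cases.
  - destruct (IHM _ _ _ H1) as [m0 [Am [-> Cm]]].
    exists (RLam m0). split; [constructor; auto|split; [reflexivity|]].
    intros d Hd. apply Cm. lia.
  - destruct (IHM1 _ _ _ H1) as [m1 [A1 [-> C1]]], (IHM2 _ _ _ H2) as [m2 [A2 [-> C2]]].
    exists (RApp m1 m2). split; [constructor; auto|split; [reflexivity|]].
    intros d Hd. simpl. rewrite C1, C2; auto.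
  - destruct (IHM1 _ _ _ H1) as [m1 [A1 [-> C1]]], (IHM2 _ _ _ H2) as [m2 [A2 [-> C2]]].
    exists (RES m1 m2). split; [constructor; auto|split; [reflexivity|]].
    intros d Hd. simpl. rewrite C1, C2; auto; lia.
  - clear H. induction Hrs as [|r rs Hr _ [mb [Ab [Eb Cb]]]].
    + exists (RBag []). split; [apply ap_bag; constructor|split; reflexivity].
    + destruct (IHM _ _ _ Hr) as [m1 [A1 [-> C1]]].
      destruct mb as [| | | | |ms]; try discriminate. inversion Ab as [| | | | |? ? Hms]; subst.
      injection Eb as Eb.
      exists (RBag (m1 :: ms)). split; [apply ap_bag; constructor; auto|split].
      * simpl. rewrite Eb. reflexivity.
      * intros d Hd. specialize (Cb d Hd). simpl in Cb |- *. rewrite (C1 d Hd), Cb. reflexivity.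
  - destruct (IHM _ _ _ H1) as [m0 [Am [-> Cm]]].
    exists (RDer m0). split; [constructor; auto|split; [reflexivity|]]. exact Cm.
Qed.

Fixpoint lsubs (d : nat) (ms ns : list rterm) : list rterm * list rterm :=
  match ms with
  | [] => ([], ns)
  | m :: ms' => let (m', ns1) := lsub d m ns in
                let (ms'', ns2) := lsubs d ms' ns1 in (m' :: ms'', ns2)
  end.

Lemma lsub_RBag d ms : forall ns,
  lsub d (RBag ms) ns = let (ms', ns') := lsubs d ms ns in (RBag ms', ns').
Proof.
  induction ms as [|m ms IH]; intros ns; simpl; auto.
  destruct (lsub d m ns) as [m' ns1]. specialize (IH ns1). simpl in IH.
  destruct (lsubs d ms ns1) as [a b].
  match type of IH with match ?e with pair _ _ => _ end = _ => destruct e as [x y] end.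
  injection IH as -> ->. reflexivity.
Qed.

(* Quantifying over [rest] says that the linear substitution consumes exactly [ns]. *)
Definition linear_inst (d : nat) (N P : term) (r : rterm) : Prop :=
  exists p ns, approx p P /\ Forall (fun n => approx n N) ns /\ occ d p = length ns /\
    forall rest, lsub d p (ns ++ rest) = (r, rest).

Lemma linear_inst_bag d N P rs : Forall (linear_inst d N P) rs -> linear_inst d N (Bang P) (RBag rs).
Proof.
  induction 1 as [|r rs [p [ns [Ap [Ans [Oc Ls]]]]] _ [pb [nsb [Apb [Ansb [Ocb Lsb]]]]]].
  - exists (RBag []), []. repeat split; [apply ap_bag; constructor|constructor].
  - inversion Apb as [| | | | |ps ? Hps]; subst.
    exists (RBag (p :: ps)), (ns ++ nsb).
    split; [apply ap_bag; constructor; auto|split; [apply Forall_app; auto|split]].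
    + simpl in *. rewrite length_app. lia.
    + intros rest. specialize (Lsb rest). rewrite lsub_RBag in Lsb |- *. simpl.
      rewrite <- app_assoc, Ls.
      destruct (lsubs d ps (nsb ++ rest)). injection Lsb as -> ->. reflexivity.
Qed.

Lemma approx_subst_inv N P : forall d r, approx r (subst d N P) -> linear_inst d N P r.
Proof.
  induction P; intros d r H; simpl in H.
  - destruct (Nat.eqb_spec n d) as [->|Hnd].
    + destruct (approx_lift_inv _ _ _ _ H) as [m [Am [-> _]]].
      exists (RVar d), [m]. simpl. rewrite Nat.eqb_refl. repeat constructor; auto.
    + exists (RVar n), []. simpl. destruct (Nat.eqb_spec n d); [contradiction|].
      repeat split; [constructor|constructor|].
      intros rest. destruct (Nat.ltb_spec d n); inversion H; reflexivity.
  - inversion H as [|? ? H1| | | |]; subst.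
    destruct (IHP _ _ H1) as [p [ns [Ap [Ans [Oc Ls]]]]].
    exists (RLam p), ns. repeat split; auto using approx.
    intros rest. simpl. rewrite Ls. reflexivity.
  - inversion H as [| |? ? ? ? H1 H2| | |]; subst.
    destruct (IHP1 _ _ H1) as [p1 [ns1 [Ap1 [Ans1 [Oc1 Ls1]]]]].
    destruct (IHP2 _ _ H2) as [p2 [ns2 [Ap2 [Ans2 [Oc2 Ls2]]]]].
    exists (RApp p1 p2), (ns1 ++ ns2).
    split; [constructor; auto|split; [apply Forall_app; auto|split]].
    + simpl. rewrite length_app. lia.
    + intros rest. simpl. rewrite <- app_assoc, Ls1, Ls2. reflexivity.
  - inversion H as [| | |? ? ? ? H1 H2| |]; subst.
    destruct (IHP1 _ _ H1) as [p1 [ns1 [Ap1 [Ans1 [Oc1 Ls1]]]]].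
    destruct (IHP2 _ _ H2) as [p2 [ns2 [Ap2 [Ans2 [Oc2 Ls2]]]]].
    exists (RES p1 p2), (ns1 ++ ns2).
    split; [constructor; auto|split; [apply Forall_app; auto|split]].
    + simpl. rewrite length_app. lia.
    + intros rest. simpl. rewrite <- app_assoc, Ls1, Ls2. reflexivity.
  - inversion H as [| | | | |? ? Hrs]; subst.
    apply linear_inst_bag. clear H. induction Hrs; constructor; auto.
  - inversion H as [| | | |? ? H1|]; subst.
    destruct (IHP _ _ H1) as [p [ns [Ap [Ans [Oc Ls]]]]].
    exists (RDer p), ns. repeat split; auto using approx.
    intros rest. simpl. rewrite Ls. reflexivity.
Qed.

Lemma root_approx_back A B b : root A B -> approx b B -> exists a, approx a A /\ rstep a (Some b).
Proof.
  intros [L M N|L M N|L N] Hb;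
    destruct (approx_plugL_inv _ _ _ Hb) as [l [x [-> [Hl Hx]]]].
  - inversion Hx as [| | |m n' ? ? Hm Hn| |]; subst.
    destruct (approx_lift_inv _ _ _ _ Hn) as [n [An [-> _]]].
    exists (RApp (rplugL l (RLam m)) n). split; [|rewrite <- (Forall2_length Hl); apply r_beta].
    constructor; [apply approx_plugL|]; auto using approx.
  - destruct (approx_subst_inv _ _ _ _ Hx) as [p [ns [Ap [Ans [Oc Ls]]]]].
    destruct (approx_lift_inv _ _ _ _ Ap) as [m [Am [-> Cm]]].
    rewrite (Cm 0) in Oc by lia.
    exists (RES m (rplugL l (RBag ns))). split.
    + constructor; [|apply approx_plugL]; auto using approx.
    + generalize (r_subst l m ns ns Oc (Permutation_refl ns)).
      specialize (Ls []). rewrite app_nil_r in Ls. rewrite (Forall2_length Hl), Ls. exact id.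
  - exists (RDer (rplugL l (RBag [x]))). split; [|apply r_der1].
    constructor. apply approx_plugL; auto using approx.
Qed.

Lemma sstep_approx_back A B : sstep A B ->
  forall b, approx b B -> exists a, approx a A /\ rstep a (Some b).
Proof.
  induction 1 as [A B Hr| | | | | |]; intros b Hb; [exact (root_approx_back _ _ _ Hr Hb)|..];
    inversion Hb; subst;
    match goal with
    | IH : forall b, approx b ?B -> _, H : approx ?b' ?B |- _ =>
        destruct (IH _ H) as [a [Ha Hab]]
    end;
    eexists; (split; [constructor; eassumption|]);
    [ exact (r_lam _ _ Hab) | exact (r_appl _ _ _ Hab) | exact (r_appr _ _ _ Hab)
    | exact (r_esl _ _ _ Hab) | exact (r_esr _ _ _ Hab) | exact (r_der _ _ Hab) ].
Qed.

Lemma ssteps_approx_back A B : ssteps A B ->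
  forall b, approx b B -> exists a, approx a A /\ rsteps a b.
Proof.
  induction 1 as [|A A1 B HA _ IH]; intros b Hb.
  - exists b. split; [exact Hb|constructor].
  - destruct (IH _ Hb) as [a1 [Ha1 Hab]].
    destruct (sstep_approx_back _ _ HA _ Ha1) as [a [Ha Haa1]].
    exists a. split; [exact Ha|econstructor; eassumption].
Qed.

Fixpoint empty_approx (M : term) : rterm :=
  match M with
  | Var i => RVar i
  | Lam M => RLam (empty_approx M)
  | App M N => RApp (empty_approx M) (empty_approx N)
  | Es M N => RES (empty_approx M) (empty_approx N)
  | Bang _ => RBag []
  | Der M => RDer (empty_approx M)
  end.

Lemma approx_empty_approx M : approx (empty_approx M) M.
Proof. induction M; simpl; constructor; auto. Qed.

Lemma empty_approx_plugL_inv l : forall X x, empty_approx X = rplugL l x ->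
  exists L Y, X = plugL L Y /\ empty_approx Y = x.
Proof.
  induction l as [|a l IH]; intros X x H; simpl in H.
  - exists [], X. auto.
  - destruct X; try discriminate. injection H as H _.
    destruct (IH _ _ H) as [L [Y [-> E]]].
    exists (X2 :: L), Y. auto.
Qed.

(* All bags of an empty approximant are empty, so each of its resource redexes has the
   shape of a surface redex of [N]. *)
Lemma rstep_empty_approx N o : rstep (empty_approx N) o -> exists u, sstep N u.
Proof.
  remember (empty_approx N) as m eqn:E. intros H. revert N E.
  induction H as [l m|l ms _|l m n|l m ns ns' _ _|l m ns _
                 |m o H IH|m o n H IH|m n o H IH|m o n H IH|m n o H IH|m o H IH|ms1 m ms2 o _ _];
    intros N E; destruct N as [| N | N1 N2 | N1 N2 | N | N]; try discriminate; simpl in E.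
  - injection E as E.
    destruct (empty_approx_plugL_inv l N _ (eq_sym E)) as [L [[] [-> EY]]]; discriminate.
  - injection E as E.
    destruct (empty_approx_plugL_inv l N _ (eq_sym E)) as [L [[] [-> EY]]]; try discriminate.
    eexists. apply ss_root, root_dbang.
  - injection E as E _.
    destruct (empty_approx_plugL_inv l N1 _ (eq_sym E)) as [L [[] [-> EY]]]; try discriminate.
    eexists. apply ss_root, root_dB.
  - injection E as _ E.
    destruct (empty_approx_plugL_inv l N2 _ (eq_sym E)) as [L [[] [-> EY]]]; try discriminate.
    eexists. apply ss_root, root_sbang.
  - injection E as _ E.
    destruct (empty_approx_plugL_inv l N2 _ (eq_sym E)) as [L [[] [-> EY]]]; try discriminate.
    eexists. apply ss_root, root_sbang.
  - injection E as E. destruct (IH N E) as [u Hu]. eexists. apply ss_lam, Hu.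
  - injection E as E _. destruct (IH N1 E) as [u Hu]. eexists. apply ss_appl, Hu.
  - injection E as _ E. destruct (IH N2 E) as [u Hu]. eexists. apply ss_appr, Hu.
  - injection E as E _. destruct (IH N1 E) as [u Hu]. eexists. apply ss_esl, Hu.
  - injection E as _ E. destruct (IH N2 E) as [u Hu]. eexists. apply ss_esr, Hu.
  - injection E as E. destruct (IH N E) as [u Hu]. eexists. apply ss_der, Hu.
  - destruct ms1; discriminate.
Qed.

Lemma rnormal_empty_approx N : snormal N -> rnormal (empty_approx N).
Proof. intros HN o Ho. destruct (rstep_empty_approx N o Ho) as [u Hu]. exact (HN u Hu). Qed.

Theorem mainTheorem5 (M : term) :
  meaningful M -> exists p : rterm, nf_taylor M p.
Proof.
  intros HM.
  destruct (meaningful_snormalizes M HM) as [N [HMN HN]].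
  destruct (ssteps_approx_back M N HMN (empty_approx N) (approx_empty_approx N)) as [m [Hm Hmp]].
  exists (empty_approx N). split.
  - exact (rnormal_empty_approx N HN).
  - exists m. split; assumption.
Qed.
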